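(* Let $G$ be a planar graph that is a subgraph of some plane triangulation $T$ whose geometric dual $T^*$ admits a $2$-factor consisting of at most two cycles. Then $\chi_1(G) \le 2$.
   Context: All graphs are finite and simple. A mapping $f : V(G) \to E(G) \cup \{\emptyset\}$ is a $1$-selection of $G$ if for every $v \in V(G)$ either $f(v)$ is an edge incident with $v$ or $f(v) = \emptyset$. The graph $G_f$ is obtained from $G$ by deleting all edges in $f(V(G))$. The robust chromatic number is $\chi_1(G) = \min_f \chi(G_f)$ over all $1$-selections $f$ of $G$. A plane triangulation is a simple plane graph in which every face is bounded by a $3$-cycle. The geometric dual $T^*$ of a plane graph $T$ has a vertex for each face of $T$ and, for each edge $e$ of $T$, an edge joining the vertices corresponding to the two faces incident with $e$ (it may be a multigraph). A $2$-factor is a $2$-regular spanning subgraph. *)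

(* Plane triangulations are represented by combinatorial
   maps (rotation systems) of Euler genus 0. *)
From mathcomp Require Import all_boot.
Set Implicit Arguments. Unset Strict Implicit. Unset Printing Implicit Defensive.

Definition simple_graph (V : finType) (adj : rel V) : Prop :=
  symmetric adj /\ irreflexive adj.

(* A 1-selection: f v = Some w means f(v) is the edge vw (incident with v);
   f v = None means f(v) = emptyset. *)
Definition one_selection (V : finType) (adj : rel V) (f : V -> option V) : Prop :=
  forall v w, f v = Some w -> adj v w.

Definition deleted (V : finType) (f : V -> option V) (u v : V) : bool :=
  (f u == Some v) || (f v == Some u).

Definition sel_graph (V : finType) (adj : rel V) (f : V -> option V) : rel V :=
  fun u v => adj u v && ~~ deleted f u v.

Definition k_colorable (V : finType) (adj : rel V) (k : nat) : Prop :=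
  exists c : V -> 'I_k, forall u v, adj u v -> c u != c v.

Definition robust_chi_le (V : finType) (adj : rel V) (k : nat) : Prop :=
  exists f, one_selection adj f /\ k_colorable (sel_graph adj f) k.

Definition is_subgraph (VG VH : finType) (adjG : rel VG) (adjH : rel VH) : Prop :=
  exists h : VG -> VH, injective h /\ forall x y, adjG x y -> adjH (h x) (h y).

(* Darts D; nd = rotation of darts around their vertex; ed = edge involution;
   vx d = the vertex (of type V) at the tail of dart d.
   Faces are the orbits of face_perm = nd \o ed. *)

Definition face_perm (D : finType) (nd ed : D -> D) : D -> D := fun d => nd (ed d).

Definition dart_link (D : finType) (nd ed : D -> D) : rel D :=
  fun x y => (y == nd x) || (y == ed x).

Definition map_adj (V D : finType) (ed : D -> D) (vx : D -> V) : rel V :=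
  fun u v => [exists d, (vx d == u) && (vx (ed d) == v)].

(* (nd, ed, vx) is a plane triangulation on the vertex set V:
   a connected rotation system of genus 0 (Euler's formula V - E + F = 2,
   with E = |D|/2), whose faces all have length 3, and whose underlying
   graph is simple (no loops, no parallel edges). *)
Definition plane_triangulation (V D : finType) (nd ed : D -> D) (vx : D -> V) : Prop :=
  [/\ injective nd,
      involutive ed /\ (forall d, ed d != d),
      (forall d d', (vx d == vx d') = fconnect nd d d') /\ (forall v, exists d, vx d = v),
      (forall d d', connect (dart_link nd ed) d d')
        /\ 2 * #|V| + 2 * fcard (face_perm nd ed) (predT : {pred D}) = #|D| + 4 &
      (forall d, order (face_perm nd ed) d = 3)
        /\ (forall d, vx (ed d) != vx d)
        /\ (forall d d', vx d = vx d' -> vx (ed d) = vx (ed d') -> d = d')].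

(* S (a set of darts closed under ed, i.e. a set of edges of T, equivalently
   of edges of the dual T^* ) is a 2-factor of the geometric dual T^*:
   every face (dual vertex) has degree exactly 2 in S.  The degree of the face
   of d0 is the number of darts of S lying on that face (a dual loop counts 2). *)
Definition dual_two_factor (D : finType) (nd ed : D -> D) (S : {set D}) : Prop :=
  (forall d, (d \in S) = (ed d \in S)) /\
  (forall d0, #|[set d in S | fconnect (face_perm nd ed) d0 d]| = 2).

(* connectivity in the 2-factor S of T^*, lifted to darts *)
Definition factor_link (D : finType) (nd ed : D -> D) (S : {set D}) : rel D :=
  fun x y => fconnect (face_perm nd ed) x y || ((x \in S) && (y == ed x)).

Definition at_most_cycles (D : finType) (nd ed : D -> D) (S : {set D}) (n : nat) : Prop :=
  exists s : seq D, size s <= n /\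
    forall d, has (fun x => connect (factor_link nd ed S) x d) s.

(* Work over F_2 with the edge/vertex incidence matrix incT and the face/edge
   matrix facemx of the triangulation.  Connectivity and Euler's formula give
   rank incT + rank facemx >= |E|, and facemx *m incT = 0, so the cycle space
   is spanned by the faces and the cut space is the orthogonal of the faces.
   The 2-factor S meets every face in two edges, so it is a cut: some
   2-colouring of the vertices makes every edge of S bichromatic.  A cycle
   avoiding S is a sum of faces whose face-indicator is constant along each
   cycle of the 2-factor; with at most two such cycles, the cycles of T - S
   span a space of dimension at most 1.  Hence each component of T - S has at
   most as many edges as vertices, so every vertex can select its own incident
   edge of T - S so that all of them are selected.  Deleting the selected
   edges leaves only bichromatic edges, and subgraphs inherit the selection. *)

From mathcomp Require Import all_boot ssralg matrix mxalgebra zmodp ring zify.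
Set Implicit Arguments. Unset Strict Implicit. Unset Printing Implicit Defensive.
Import GRing.Theory.

Local Open Scope ring_scope.

Lemma addrr_F2 (x : 'F_2) : x + x = 0.
Proof. by case: x => [[|[|//]]] ?; apply: val_inj. Qed.

Lemma F2_addr0_eq (x y : 'F_2) : x + y = 0 -> x = y.
Proof. by move=> xy0; rewrite -[x]addr0 -(addrr_F2 y) addrA xy0 add0r. Qed.

Lemma F2_triangle (x y z : 'F_2) : (x + y) + (y + z) + (z + x) = 0.
Proof.
have -> : (x + y) + (y + z) + (z + x) = (x + x) + (y + y) + (z + z) by ring.
by rewrite !addrr_F2; ring.
Qed.

Lemma sum_mulrn_eq_in (V : nmodType) (T : finType) (A : {pred T}) (F : T -> V) t :
  \sum_(s in A) F s *+ (t == s) = if t \in A then F t else 0.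
Proof.
under eq_bigr do rewrite mulrb.
rewrite -big_mkcondr /=; case: ifP => At.
  by rewrite (big_pred1 t) // => s /=; rewrite eq_sym; case: eqP => [->|]; rewrite ?andbT ?andbF.
by rewrite big_pred0 // => s; apply/andP => -[As /eqP ts]; move: At; rewrite ts As.
Qed.

Lemma sum_mulrn_eq (V : nmodType) (T : finType) (F : T -> V) t :
  \sum_s F s *+ (t == s) = F t.
Proof. exact: sum_mulrn_eq_in. Qed.

Lemma mxrank_lt_support (F : fieldType) (k n : nat) (X : {set 'I_n}) x0 (M : 'M[F]_(k, n)) :
  x0 \in X -> (forall a j, j \notin X -> M a j = 0) -> (forall a, \sum_j M a j = 0) ->
  (\rank M < #|X|)%N.
Proof.
(* The rows of M lie in the span of the #|X| - 1 vectors e_j - e_x0, j in X :\ x0. *)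
move=> Xx0 suppM sumM0; set X' := X :\ x0.
have cardX : #|X| = #|X'|.+1 by rewrite (cardsD1 x0 X) Xx0.
pose ex : 'I_#|X'| -> 'I_n := enum_val.
pose J : 'M[F]_(#|X'|, n) := \matrix_(b, j) ((j == ex b)%:R - (j == x0)%:R).
have sumX' a : \sum_(j in X') M a j = - M a x0.
  have := sumM0 a; rewrite (bigID (mem X)) /= [S in _ + S]big1 => [|j /suppM //].
  rewrite addr0 (bigD1 x0) //= => /eqP; rewrite addrC addr_eq0 => /eqP <-.
  by apply: eq_bigl => j; rewrite !inE andbC.
have -> : M = (\matrix_(a, b) M a (ex b)) *m J.
  apply/matrixP => a j; rewrite !mxE.
  under eq_bigr do rewrite !mxE mulrBr !mulr_natr.
  rewrite sumrB /ex -(big_enum_val (fun j' => M a j' *+ (j == j'))).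
  rewrite -(big_enum_val (fun j' => M a j' *+ (j == x0))) /= sumrMnl sumX'.
  rewrite sum_mulrn_eq_in !inE; case: (eqVneq j x0) => [->|jx0] /=.
    by rewrite mulr1n sub0r opprK.
  by rewrite mulr0n subr0; case: ifPn => // /suppM ->.
rewrite cardX ltnS; exact: leq_trans (mxrankM_maxr _ _) (rank_leq_row J).
Qed.

Lemma row_const_sub (F : fieldType) k (y : 'rV[F]_k) :
  (forall j j', y 0 j = y 0 j') -> (y <= (const_mx 1 : 'rV_k))%MS.
Proof.
case: k y => [|k] y yconst; first by rewrite thinmx0 sub0mx.
have -> : y = y 0 ord0 *: const_mx 1 by apply/rowP => j; rewrite !mxE mulr1.
exact: scalemx_sub.
Qed.

Lemma kernel_in_rowspace (F : fieldType) m n p (A : 'M[F]_(m, n)) (B : 'M[F]_(n, p))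
    (v : 'rV[F]_n) :
  A *m B = 0 -> (n <= \rank A + \rank B)%N -> v *m B = 0 -> exists x, v = x *m A.
Proof.
move=> AB0 rankAB vB0; apply/submxP.
have AkerB : (A <= kermx B)%MS by apply/sub_kermxP.
have kerBA : (kermx B <= A)%MS.
  rewrite -(mxrank_leqif_sup AkerB).2 mxrank_ker; apply/eqP.
  by move: (mxrankS AkerB) (rank_leq_col B); rewrite mxrank_ker; lia.
by apply: submx_trans kerBA; apply/sub_kermxP.
Qed.

(** * The cycle space of a graph *)

Section IncidenceGraph.
Variables (m n : nat) (u w : 'I_m -> 'I_n).
Hypothesis loopfree : forall i, u i != w i.

Definition incmx : 'M['F_2]_(m, n) := \matrix_(i, j) ((u i == j)%:R + (w i == j)%:R).
Definition incident i j := (u i == j) || (w i == j).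
Definition degree (R : {set 'I_m}) j := #|[set i in R | incident i j]|.

Lemma sum_degree (R : {set 'I_m}) : (\sum_j degree R j = 2 * #|R|)%N.
Proof.
have degE j : degree R j = (\sum_(i in R) incident i j)%N.
  rewrite /degree -sum1_card big_mkcond [RHS]big_mkcond; apply: eq_bigr => i _.
  by rewrite !inE; case: (i \in R); case: incident.
under eq_bigr do rewrite degE.
rewrite exchange_big /= -sum1_card big_distrr /=.
apply: eq_bigr => i _; rewrite (bigD1 (u i)) // (bigD1 (w i)) /=; last by rewrite eq_sym loopfree.
rewrite /incident !eqxx orbT big1 // => j /andP[/negPf uj /negPf wj].
by rewrite ![_ == j]eq_sym uj wj.
Qed.

Lemma incmx_row_sum i : \sum_j incmx i j = 0.
Proof.
under eq_bigr do rewrite mxE.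
by rewrite big_split /= !(sum_mulrn_eq (fun=> 1)) addrr_F2.
Qed.

Lemma incmx_tr_entry (y : 'rV['F_2]_n) i : (y *m incmx^T) 0 i = y 0 (u i) + y 0 (w i).
Proof.
rewrite mxE; under eq_bigr do rewrite !mxE mulrDr !mulr_natr.
by rewrite big_split /= !sum_mulrn_eq.
Qed.

Definition cycle_in (R : {set 'I_m}) (z : 'rV['F_2]_m) :=
  z *m incmx = 0 /\ forall i, i \notin R -> z 0 i = 0.

Lemma cycle_in_dense (R : {set 'I_m}) : R != set0 -> (#|[set j | 0 < degree R j]| <= #|R|)%N ->
  exists2 z, cycle_in R z & z != 0.
Proof.
move=> /set0Pn[e0 Re0] denseR; set X := [set j | (0 < degree R j)%N].
have endsX e : e \in R -> (u e \in X) && (w e \in X).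
  move=> Re; rewrite !inE /degree !card_gt0; apply/andP; split; apply/set0Pn; exists e;
  by rewrite !inE Re /incident eqxx ?orbT.
pose er : 'I_#|R| -> 'I_m := enum_val.
have Rer a : er a \in R by apply: enum_valP.
pose M := rowsub er incmx.
have rankM : (\rank M < #|R|)%N.
  apply: leq_trans denseR; apply: (@mxrank_lt_support _ _ _ _ (u e0)).
  - by case/andP: (endsX _ Re0).
  - move=> a j jX; rewrite !mxE; case/andP: (endsX _ (Rer a)) => uX wX.
    have [uj wj] : (u (er a) == j) = false /\ (w (er a) == j) = false.
      by split; apply: contraNF jX => /eqP <-.
    by rewrite uj wj addr0.
  - by move=> a; under eq_bigr do rewrite mxE; apply: incmx_row_sum.
have : kermx M != 0 by rewrite kermx_eq0 /row_free ltn_eqF.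
case/rowV0Pn => q /sub_kermxP qM q0.
have zE i : (q *m rowsub er 1%:M) 0 i = \sum_a q 0 a *+ (er a == i).
  by rewrite mxE; apply: eq_bigr => a _; rewrite !mxE mulr_natr.
exists (q *m rowsub er 1%:M); first split.
- by rewrite -mulmxA -rowsubE.
- move=> i Ri; rewrite zE big1 // => a _.
  by case: eqVneq => [eai|]; rewrite ?mulr0n // -eai Rer in Ri.
- apply: contra_neq q0 => z0; apply/rowP => a; rewrite mxE.
  have := congr1 (fun z : 'rV_m => z 0 (er a)) z0; rewrite /= zE mxE => <-.
  under eq_bigr do rewrite (inj_eq enum_val_inj) eq_sym.
  by rewrite sum_mulrn_eq.
Qed.

Definition acyclic (R : {set 'I_m}) := forall z, cycle_in R z -> z = 0.

Lemma acyclicS (R R' : {set 'I_m}) : R' \subset R -> acyclic R -> acyclic R'.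
Proof.
move=> sR'R acR z [zinc zR']; apply: acR; split=> // i.
by move/(contra (subsetP sR'R i)); apply: zR'.
Qed.

Lemma acyclic_leaf (R : {set 'I_m}) a : acyclic R -> R != set0 -> exists2 j, j != a & degree R j = 1%N.
Proof.
move=> acR R0.
case: (pickP (fun j => (j != a) && (degree R j == 1%N))) => [j /andP[ja /eqP]|noleaf].
  by exists j.
suff dense : (#|[set j | 0 < degree R j]| <= #|R|)%N.
  by have [z /acR ->] := cycle_in_dense R0 dense; rewrite eqxx.
set X := [set j | (0 < degree R j)%N].
have sumX : (\sum_j 2 * (j \in X) = 2 * #|X|)%N.
  rewrite -big_distrr /= -sum1_card; congr (2 * _)%N.
  by rewrite [RHS]big_mkcond; apply: eq_bigr => j _; case: (j \in X).
have sumdeg : (\sum_j (degree R j + (j == a)) = 2 * #|R| + 1)%N.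
  by rewrite big_split /= sum_degree (bigD1 a) //= eqxx big1 ?addn0 // => j /negPf ->.
suff : (2 * #|X| <= 2 * #|R| + 1)%N by lia.
rewrite -sumX -sumdeg; apply: leq_sum => j _; rewrite inE.
case: (posnP (degree R j)) => [->|dpos] //=.
case: (eqVneq j a) => [_|ja] /=; first by lia.
by have := noleaf j; rewrite /= ja /= => /eqP; lia.
Qed.

Lemma acyclic_selection (R : {set 'I_m}) a : acyclic R -> exists sel : 'I_n -> option 'I_m,
  (forall j i, sel j = Some i -> [/\ i \in R, incident i j & j != a]) /\
  (forall i, i \in R -> exists j, sel j = Some i).
Proof.
elim: {R}_.+1 {-2}R (ltnSn #|R|) => // N IH R cardR acR.
have [->|R0] := eqVneq R set0.
  by exists (fun=> None); split=> // i; rewrite inE.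
have [j ja /eqP/cards1P[i0 Rj]] := acyclic_leaf a acR R0.
have /setIdP[Ri0 i0j] : i0 \in [set i in R | incident i j] by rewrite Rj set11.
have only_i0 i : i \in R -> incident i j -> i = i0.
  by move=> Ri ij; apply/set1P; rewrite -Rj inE Ri.
set R' := R :\ i0.
have cardR' : (#|R'| < N)%N by move: cardR; rewrite (cardsD1 i0 R) Ri0.
have [sel [selR' coverR']] := IH R' cardR' (acyclicS (subD1set R i0) acR).
exists (fun j' => if j' == j then Some i0 else sel j'); split.
  move=> j' i; case: eqP => [-> [<-] //|_ /selR'[]].
  by rewrite inE => /andP[].
move=> i Ri; case: (eqVneq i i0) => [->|ii0]; first by exists j; rewrite eqxx.
have [j' selj'] : exists j', sel j' = Some i by apply: coverR'; rewrite !inE ii0.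
exists j'; case: eqP => [j'j|//]; have [_ ij' _] := selR' _ _ selj'.
by move: ii0; rewrite (only_i0 i Ri) ?eqxx // -j'j.
Qed.

Lemma selection_of_rank1_cycles (U : {set 'I_m}) (c : 'rV['F_2]_m) :
  (forall z, cycle_in U z -> exists g, z = g *: c) ->
  exists sel : 'I_n -> option 'I_m,
    (forall j i, sel j = Some i -> incident i j) /\ (forall i, i \in U -> exists j, sel j = Some i).
Proof.
move=> rank1; have [c0|/rV0Pn[i0 ci0]] := eqVneq c 0.
  have [->|/set0Pn[i1 Ui1]] := eqVneq U set0.
    by exists (fun=> None); split=> // i; rewrite inE.
  have acU : acyclic U by move=> z /rank1[g ->]; rewrite c0 scaler0.
  have [sel [selU coverU]] := acyclic_selection (u i1) acU.
  by exists sel; split=> // j i /selU[].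
set R0 := U :\ i0.
have acR0 : acyclic R0.
  move=> z [zinc zR0]; have [g zE] : exists g, z = g *: c.
    by apply: rank1; split=> // i Ui; apply: zR0; rewrite !inE (negPf Ui) andbF.
  have : z 0 i0 = 0 by apply: zR0; rewrite !inE eqxx.
  by rewrite zE mxE => /eqP; rewrite mulf_eq0 (negPf ci0) orbF => /eqP ->; rewrite scale0r.
have [sel [selR0 coverR0]] := acyclic_selection (u i0) acR0.
exists (fun j => if j == u i0 then Some i0 else sel j); split.
  by move=> j i; case: eqP => [-> [<-]|_ /selR0[] //]; rewrite /incident eqxx.
move=> i Ui; case: (eqVneq i i0) => [->|ii0]; first by exists (u i0); rewrite eqxx.
have [j selj] : exists j, sel j = Some i by apply: coverR0; rewrite !inE ii0.
exists j; case: eqP => [ju|//]; have [_ _] := selR0 _ _ selj.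
by rewrite ju eqxx.
Qed.
End IncidenceGraph.

Lemma robust_chi_le_subgraph (VG VH : finType) (adjG : rel VG) (adjH : rel VH) k :
  symmetric adjG -> is_subgraph adjG adjH -> robust_chi_le adjH k -> robust_chi_le adjG k.
Proof.
move=> symG [h [hinj hadj]] [f [fsel [c cf]]].
pose g x := if f (h x) is Some y then [pick x' | adjG x x' && (h x' == y)] else None.
have gE x x' : adjG x x' -> f (h x) = Some (h x') -> g x = Some x'.
  move=> xx' fx; rewrite /g fx; case: pickP => [x'' /andP[_ /eqP /hinj -> //]|/(_ x')].
  by rewrite xx' eqxx.
exists g; split.
  by move=> x x'; rewrite /g; case: (f (h x)) => [y|//]; case: pickP => [? /andP[? _] [<-]|].
exists (c \o h) => x x' /andP[xx' ndel]; apply: cf; apply/andP; split; first exact: hadj.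
apply: contra ndel; rewrite /deleted => /orP[/eqP fx|/eqP fx'].
  by rewrite (gE _ _ xx' fx) eqxx.
by rewrite (gE x' x _ fx') ?eqxx ?orbT // symG.
Qed.

(** * Plane triangulations *)

Section PlaneTriangulation.
Variables (V D : finType) (nd ed : D -> D) (vx : D -> V).
Hypothesis ndI : injective nd.
Hypothesis edK : involutive ed.
Hypothesis ed_neq : forall d, ed d != d.
Hypothesis vx_eq : forall d d', (vx d == vx d') = fconnect nd d d'.
Hypothesis face3 : forall d, order (face_perm nd ed) d = 3%N.
Hypothesis connected : forall d d', connect (dart_link nd ed) d d'.
Hypothesis vx_surj : forall v, exists d, vx d = v.
Hypothesis euler :
  (2 * #|V| + 2 * fcard (face_perm nd ed) (predT : {pred D}) = #|D| + 4)%N.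

Local Notation face := (face_perm nd ed).

Lemma edI : injective ed. Proof. exact: inv_inj. Qed.
Lemma faceI : injective face. Proof. by move=> x y /ndI /edI. Qed.

Lemma vx_nd d : vx (nd d) = vx d.
Proof. by apply/esym/eqP; rewrite vx_eq fconnect1. Qed.

Lemma vx_face d : vx (face d) = vx (ed d).
Proof. exact: vx_nd. Qed.

Lemma face3K d : face (face (face d)) = d.
Proof. by have := iter_order faceI d; rewrite face3. Qed.

Lemma fconnect_face d d' : fconnect face d d' = (d' \in [:: d; face d; face (face d)]).
Proof. by rewrite fconnect_orbit /orbit face3. Qed.

Lemma sum_face (F : D -> 'F_2) r :
  \sum_d (fconnect face r d)%:R * F d = F r + F (face r) + F (face (face r)).
Proof.
under eq_bigr do rewrite mulr_natl mulrb fconnect_face.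
rewrite -big_mkcond -big_uniq /=; last by have := orbit_uniq face r; rewrite /orbit face3.
by rewrite !big_cons big_nil addr0 addrA.
Qed.

Lemma connected_const (T : eqType) (P : D -> T) :
  (forall d, P (nd d) = P d) -> (forall d, P (ed d) = P d) -> forall d d', P d = P d'.
Proof.
move=> Pnd Ped d d'; case/connectP: (connected d d') => p.
elim: p d => [|x p IH] d /=; first by move=> _ ->.
by case/andP => /orP[]/eqP -> /IH Pp /Pp <-; rewrite ?Pnd ?Ped.
Qed.

Definition rep_dart d := (enum_rank d < enum_rank (ed d))%N.

Lemma rep_dart_ed d : rep_dart (ed d) = ~~ rep_dart d.
Proof.
rewrite /rep_dart edK ltnNge leq_eqVlt negb_or; case: ltnP => //= _; rewrite ?andbF ?andbT //.
by rewrite eq_sym (inj_eq val_inj) (inj_eq enum_rank_inj) ed_neq.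
Qed.

Definition nE := #|[pred d | rep_dart d]|.
Definition edart (i : 'I_nE) : D := enum_val i.

Lemma edart_ind (Q : D -> Prop) :
  (forall d, Q (ed d) -> Q d) -> (forall i, Q (edart i)) -> forall d, Q d.
Proof.
move=> Q_ed Q_edart d; wlog rd : d / rep_dart d.
  by move=> IH; case rd: (rep_dart d); [exact: IH|apply: Q_ed; apply: IH; rewrite rep_dart_ed rd].
by rewrite -[d](enum_rankK_in (rd : d \in [pred d | rep_dart d])).
Qed.

Lemma sum_darts (M : nmodType) (F : D -> M) : \sum_d F d = \sum_i (F (edart i) + F (ed (edart i))).
Proof.
rewrite big_split /= /edart -(big_enum_val F) -(big_enum_val (fun d => F (ed d))) /=.
rewrite (bigID rep_dart) /=; congr (_ + _).
by rewrite (reindex_inj edI) /=; apply: eq_bigl => d; rewrite rep_dart_ed negbK.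
Qed.

Definition nV := #|V|.
Definition nF := #|[pred d | froots face d]|.
Definition fdart (j : 'I_nF) : D := enum_val j.

Definition vtail i := enum_rank (vx (edart i)).
Definition vhead i := enum_rank (vx (ed (edart i))).
Definition incT := incmx vtail vhead.

Definition face_weight (a : 'rV['F_2]_nF) d := \sum_j a 0 j *+ fconnect face (fdart j) d.
Definition facemx : 'M['F_2]_(nF, nE) := \matrix_(j, i)
  ((fconnect face (fdart j) (edart i))%:R + (fconnect face (fdart j) (ed (edart i)))%:R).

Lemma facemx_entry a i : (a *m facemx) 0 i = face_weight a (edart i) + face_weight a (ed (edart i)).
Proof.
rewrite mxE /face_weight -big_split; apply: eq_bigr => j _.
by rewrite !mxE mulrDr !mulr_natr.
Qed.

Lemma face_weight_face a d : face_weight a (face d) = face_weight a d.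
Proof. by apply: eq_bigr => j _; rewrite -(same_fconnect1_r faceI). Qed.

(* Each vertex of a triangular face is met by exactly two of its sides. *)
Lemma facemx_incT : facemx *m incT = 0.
Proof.
apply/matrixP => j v; rewrite !mxE.
pose B d := (enum_rank (vx d) == v)%:R + (enum_rank (vx (ed d)) == v)%:R : 'F_2.
transitivity (\sum_d (fconnect face (fdart j) d)%:R * B d).
  by rewrite sum_darts; apply: eq_bigr => i _; rewrite !mxE /B edK; ring.
by rewrite sum_face /B -!vx_face face3K F2_triangle.
Qed.

Lemma face_weight_fdart a j : face_weight a (fdart j) = a 0 j.
Proof.
rewrite -[RHS](sum_mulrn_eq (fun j' => a 0 j')); apply: eq_bigr => j' _; congr (_ *+ nat_of_bool _).
apply/idP/idP => [conn|/eqP->]; last exact: connect0.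
have rootE j1 : froot face (fdart j1) = fdart j1 by have := enum_valP j1; rewrite inE => /eqP.
apply/eqP/enum_val_inj; rewrite -/(fdart j) -/(fdart j') -(rootE j) -(rootE j').
by apply/eqP; rewrite (root_connect (fconnect_sym faceI)) (fconnect_sym faceI).
Qed.

Lemma kermx_incT_const : (kermx incT^T <= (const_mx 1 : 'rV_nV))%MS.
Proof.
apply/row_subP => k; set y := row k (kermx incT^T).
have yinc : y *m incT^T = 0 by apply/sub_kermxP; apply: row_sub.
pose Y v := y 0 (enum_rank v).
have Yed d : Y (vx (ed d)) = Y (vx d).
  elim/edart_ind: d => [d /esym|i]; first by rewrite edK.
  apply/esym/F2_addr0_eq; have := congr1 (fun z : 'rV_nE => z 0 i) yinc.
  by rewrite /incT incmx_tr_entry /= => ->; rewrite mxE.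
have Yconst := connected_const (P := Y \o vx) (fun d => congr1 Y (vx_nd d)) Yed.
apply: row_const_sub => j j'.
have [[d dj] [d' dj']] := (vx_surj (enum_val j), vx_surj (enum_val j')).
by rewrite -[j]enum_valK -[j']enum_valK -dj -dj'; apply: Yconst.
Qed.

Lemma kermx_facemx_const : (kermx facemx <= (const_mx 1 : 'rV_nF))%MS.
Proof.
apply/row_subP => k; set a := row k (kermx facemx).
have afc : a *m facemx = 0 by apply/sub_kermxP; apply: row_sub.
have Ped d : face_weight a (ed d) = face_weight a d.
  elim/edart_ind: d => [d /esym|i]; first by rewrite edK.
  by apply/esym/F2_addr0_eq; rewrite -facemx_entry afc mxE.
have Pnd d : face_weight a (nd d) = face_weight a d.
  by rewrite -[in LHS](edK d) -/(face (ed d)) face_weight_face Ped.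
apply: row_const_sub => j j'.
by rewrite -!face_weight_fdart; apply: connected_const.
Qed.

Lemma card_darts : #|D| = (nE + nE)%N.
Proof.
rewrite -(cardC [pred d | rep_dart d]); congr (_ + _)%N.
transitivity #|ed @^-1: [set d | rep_dart d]|.
  by apply: eq_card => d; rewrite !inE rep_dart_ed.
by rewrite card_preimset ?cardsE //; apply: edI.
Qed.

Lemma euler_edges : (nV + nF = nE + 2)%N.
Proof.
have fcardE : fcard face (predT : {pred D}) = nF by apply: eq_card => d; rewrite !inE andbT.
by move: euler; rewrite card_darts fcardE /nV; lia.
Qed.

Lemma rank_incT_facemx : (nE <= \rank incT + \rank facemx)%N.
Proof.
have kerV : (nV - \rank incT <= 1)%N.
  rewrite -mxrank_tr -mxrank_ker; apply: leq_trans (mxrankS kermx_incT_const) _.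
  exact: rank_leq_row.
have kerF : (nF - \rank facemx <= 1)%N.
  rewrite -mxrank_ker; apply: leq_trans (mxrankS kermx_facemx_const) _.
  exact: rank_leq_row.
by move: euler_edges kerV kerF; lia.
Qed.

Lemma cut_of_face_orthogonal (s : 'rV['F_2]_nE) :
  s *m facemx^T = 0 -> exists y : 'rV_nV, s = y *m incT^T.
Proof.
apply: kernel_in_rowspace; first by rewrite -trmx_mul facemx_incT trmx0.
by rewrite !mxrank_tr rank_incT_facemx.
Qed.

Lemma cycle_of_faces (z : 'rV['F_2]_nE) : z *m incT = 0 -> exists a, z = a *m facemx.
Proof.
apply: kernel_in_rowspace; first exact: facemx_incT.
by rewrite addnC rank_incT_facemx.
Qed.

Variable S : {set D}.
Hypothesis S_ed : forall d, (d \in S) = (ed d \in S).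
Hypothesis S_face : forall d0, #|[set d in S | fconnect face d0 d]| = 2%N.

Lemma two_factor_cut : exists col : V -> 'F_2, forall d, d \in S -> col (vx d) != col (vx (ed d)).
Proof.
pose s : 'rV['F_2]_nE := \row_i (edart i \in S)%:R.
have sfc : s *m facemx^T = 0.
  apply/rowP => j; rewrite !mxE.
  transitivity (\sum_d (fconnect face (fdart j) d)%:R * (d \in S)%:R : 'F_2).
    by rewrite sum_darts; apply: eq_bigr => i _; rewrite !mxE -S_ed; ring.
  transitivity (#|[set d in S | fconnect face (fdart j) d]|%:R : 'F_2).
    rewrite -sum1_card natr_sum [RHS]big_mkcond /=; apply: eq_bigr => d _.
    by rewrite inE; case: (d \in S); case: (fconnect face (fdart j) d); rewrite ?mulr1 ?mulr0.
  by rewrite S_face; apply: val_inj.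
have [y sy] := cut_of_face_orthogonal sfc.
exists (fun v => y 0 (enum_rank v)).
have sE d : (d \in S)%:R = y 0 (enum_rank (vx d)) + y 0 (enum_rank (vx (ed d))) :> 'F_2.
  elim/edart_ind: d => [d|i]; first by rewrite -S_ed edK addrC.
  by have := congr1 (fun z : 'rV_nE => z 0 i) sy; rewrite /incT incmx_tr_entry mxE.
move=> d Sd; apply/eqP => ycol; move: (sE d); rewrite Sd ycol addrr_F2.
by move/eqP; rewrite oner_eq0.
Qed.

Lemma factor_link_const (T : eqType) (P : D -> T) :
  (forall d, P (face d) = P d) -> (forall d, d \in S -> P (ed d) = P d) ->
  forall x y, connect (factor_link nd ed S) x y -> P x = P y.
Proof.
move=> Pface PS x y /connectP[p]; elim: p x => [|z p IH] x /=; first by move=> _ ->.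
case/andP => /orP[xz|/andP[Sx /eqP ->]] /IH Pp /Pp <-; last by rewrite PS.
by move: xz; rewrite fconnect_face !inE => /or3P[]/eqP->; rewrite ?Pface.
Qed.

Variable roots : seq D.
Hypothesis roots_size : (size roots <= 2)%N.
Hypothesis roots_cover : forall d, has (fun x => connect (factor_link nd ed S) x d) roots.

Definition off_factor := [set i | edart i \notin S].

Lemma cycles_off_factor_rank1 : exists c : 'rV['F_2]_nE,
  forall z, cycle_in vtail vhead off_factor z -> exists g, z = g *: c.
Proof.
case Eroots: roots roots_size roots_cover => [|c1 rest] size_roots cover.
  exists 0 => z _; exists 0; apply/rowP => i.
  by have := cover (edart i).
set c2 := head c1 rest.
have cover2 d : connect (factor_link nd ed S) c1 d || connect (factor_link nd ed S) c2 d.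
  have := cover d; rewrite /c2.
  by case: rest {Eroots c2} size_roots cover => [|c [|? ?]] //= _ _; rewrite ?orbF ?orbb.
pose chi d : 'F_2 := (connect (factor_link nd ed S) c1 d)%:R.
exists (\row_i (chi (edart i) + chi (ed (edart i)))) => z [zinc zoff].
have [a za] := cycle_of_faces zinc.
pose P := face_weight a.
have PS d : d \in S -> P (ed d) = P d.
  elim/edart_ind: d => [d PSed Sd|i Si]; first by rewrite -[in RHS](edK d) PSed // -S_ed.
  by apply/esym/F2_addr0_eq; rewrite -facemx_entry -za zoff // inE Si.
have Pconst x y : connect (factor_link nd ed S) x y -> P x = P y.
  exact: factor_link_const (face_weight_face a) PS x y.
set g := P c1 + P c2.
have Psplit d : P d = P c2 + chi d * g.
  rewrite /chi; case c1d: (connect _ c1 d); last first.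
    by move: (cover2 d); rewrite c1d /= => /Pconst <-; rewrite mul0r addr0.
  by rewrite mul1r /g -(Pconst _ _ c1d) addrCA addrr_F2 addr0.
exists g; apply/rowP => i; rewrite za facemx_entry !mxE -/(P (edart i)) -/(P (ed (edart i))).
rewrite (Psplit (edart i)) (Psplit (ed (edart i))).
by rewrite addrACA addrr_F2 add0r -mulrDl mulrC.
Qed.

Hypothesis vx_ed : forall d, vx (ed d) != vx d.

Lemma vtail_neq_vhead i : vtail i != vhead i.
Proof. by rewrite /vtail /vhead (inj_eq enum_rank_inj) eq_sym vx_ed. Qed.

Lemma dart_selection : exists sel : V -> option D,
  (forall v d, sel v = Some d -> vx d = v) /\
  (forall d, d \notin S -> sel (vx d) = Some d \/ sel (vx (ed d)) = Some (ed d)).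
Proof.
have [c rank1] := cycles_off_factor_rank1.
have [esel [eselinc cover]] := selection_of_rank1_cycles vtail_neq_vhead rank1.
pose sel v := if esel (enum_rank v) is Some i then
  Some (if vtail i == enum_rank v then edart i else ed (edart i)) else None.
exists sel; split.
  move=> v d; rewrite /sel; case E: (esel _) => [i|//] [<-].
  have := eselinc _ _ E; rewrite /incident /vtail /vhead.
  by case: ifP => [/eqP vi _|_ /= /eqP vi]; apply: enum_rank_inj.
elim/edart_ind => [d IH nSd|i nSi].
  by rewrite edK in IH; case: IH; rewrite -?S_ed //; [right|left].
have [j eselj] : exists j, esel j = Some i by apply: cover; rewrite inE.
rewrite /sel -/(vtail i) -/(vhead i).
have /orP[/eqP ij|/eqP ij] := eselinc _ _ eselj.
  by left; rewrite ij eselj -ij eqxx.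
by right; rewrite ij eselj -ij (negPf (vtail_neq_vhead i)).
Qed.

Lemma map_robust_chi_le2 : robust_chi_le (map_adj ed vx) 2.
Proof.
have [col colS] := two_factor_cut.
have [sel [selvx selcover]] := dart_selection.
exists (fun v => omap (vx \o ed) (sel v)); split.
  move=> v w; case selv: (sel v) => [d|//] [<-]; apply/existsP; exists d.
  by rewrite (selvx _ _ selv) /=; apply/andP.
exists col => v w /andP[/existsP[d /andP[/eqP dv /eqP dw]] ndel].
have [Sd|nSd] := boolP (d \in S); first by rewrite -dv -dw colS.
exfalso; move: ndel; rewrite /deleted -dv -dw.
by case: (selcover d nSd) => -> /=; rewrite ?edK eqxx ?orbT.
Qed.
End PlaneTriangulation.

Lemma plane_triangulation_robust_chi_le2 (V D : finType) (nd ed : D -> D) (vx : D -> V)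
    (S : {set D}) :
  plane_triangulation nd ed vx -> dual_two_factor nd ed S -> at_most_cycles nd ed S 2 ->
  robust_chi_le (map_adj ed vx) 2.
Proof.
move=> [ndI [edK ed_neq] [vx_eq vx_surj] [conn euler] [face3 [vx_ed _]]]
  [S_ed S_face] [roots [roots_size roots_cover]].
exact: (map_robust_chi_le2 ndI edK ed_neq vx_eq face3 conn vx_surj euler S_ed S_face
  roots_size roots_cover vx_ed).
Qed.

Theorem corollary3p6 (VG : finType) (adjG : rel VG) (V D : finType)
    (nd ed : D -> D) (vx : D -> V) :
  simple_graph adjG ->
  plane_triangulation nd ed vx ->
  is_subgraph adjG (map_adj ed vx) ->
  (exists S : {set D}, dual_two_factor nd ed S /\ at_most_cycles nd ed S 2) ->
  robust_chi_le adjG 2.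
Proof.
move=> [symG _] triT subG [S [factorS cyclesS]].
apply: robust_chi_le_subgraph symG subG _.
exact: plane_triangulation_robust_chi_le2 triT factorS cyclesS.
Qed.
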